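(* Let $(X,\tau)$ and $(Y,\sigma)$ be fuzzifying topological spaces, $f:X\to Y$, and let $\beta^X_P\in\Im(P(X))$ be a pre-base of $\tau_P$. Then $$O_P(f)=\inf_{B\subseteq X}\min\big(1,\ 1-\beta_P^X(B)+\sigma_P(f(B))\big),$$ i.e. $O_P(f)=[\forall B(B\in\beta^X_P\to f(B)\in\sigma_P)]$.
   Context: A fuzzifying topology on $Z$ is $\tau:P(Z)\to[0,1]$ with $\tau(Z)=1$, $\tau(A\cap B)\ge\min(\tau(A),\tau(B))$, $\tau(\bigcup A_\lambda)\ge\inf\tau(A_\lambda)$. $N_x(A)=\sup_{x\in B\subseteq A}\tau(B)$; $Cl(A)(x)=1-N_x(Z\setminus A)$; for $\mu:Z\to[0,1]$, $Int(\mu)(x)=\sup_{x\in B}\min(\tau(B),\inf_{y\in B}\mu(y))$; pre-open degrees $\tau_P(A)=\inf_{x\in A}Int(Cl(A))(x)$ (similarly $\sigma_P$ for $(Y,\sigma)$); $N^P_x(A)=\sup_{x\in B\subseteq A}\tau_P(B)$. A pre-base of $\tau_P$ is $\beta\in\Im(P(X))$ with $\beta\le\tau_P$ pointwise and $N^P_x(A)\le\sup_{x\in B\subseteq A}\beta(B)$ for all $x\in X$, $A\subseteq X$. Fuzzifying pre-openness: $O_P(f)=\inf_{U\subseteq X}\min(1,1-\tau_P(U)+\sigma_P(f(U)))$. *)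

From HB Require Import structures.
From mathcomp Require Import all_boot all_order all_algebra.
From mathcomp Require Import all_classical all_reals.
Set Implicit Arguments. Unset Strict Implicit. Unset Printing Implicit Defensive.
Import Order.TTheory GRing.Theory Num.Theory.
Local Open Scope classical_set_scope.
Local Open Scope ring_scope.

Section FuzzyDefs.
Variable R : realType.

(* infimum / supremum computed in the complete lattice [0,1]:
   inf of the empty family is 1, sup of the empty family is 0. *)
Definition inf01 (S : set R) : R := inf (S `|` [set 1]).
Definition sup01 (S : set R) : R := sup (S `|` [set 0]).

Variable Z : Type.

Definition is_fuzzifying_topology (tau : set Z -> R) : Prop :=
  [/\ (forall A, 0 <= tau A <= 1),
      tau setT = 1,
      (forall A B, Num.min (tau A) (tau B) <= tau (A `&` B)) &
      (forall F : set (set Z), inf01 (tau @` F) <= tau (\bigcup_(A in F) A))].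

Definition nbhd (tau : set Z -> R) (x : Z) (A : set Z) : R :=
  sup01 [set tau B | B in [set B | B x /\ B `<=` A]].

Definition fclosure (tau : set Z -> R) (A : set Z) (x : Z) : R :=
  1 - nbhd tau x (~` A).

Definition finterior (tau : set Z -> R) (mu : Z -> R) (x : Z) : R :=
  sup01 [set Num.min (tau B) (inf01 (mu @` B)) | B in [set B | B x]].

Definition preopen (tau : set Z -> R) (A : set Z) : R :=
  inf01 [set finterior tau (fclosure tau A) x | x in A].

Definition prenbhd (tau : set Z -> R) (x : Z) (A : set Z) : R :=
  sup01 [set preopen tau B | B in [set B | B x /\ B `<=` A]].

Definition is_prebase (tau : set Z -> R) (beta : set Z -> R) : Prop :=
  [/\ (forall A, 0 <= beta A <= 1),
      (forall A, beta A <= preopen tau A) &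
      (forall x A, prenbhd tau x A <=
         sup01 [set beta B | B in [set B | B x /\ B `<=` A]])].
End FuzzyDefs.

Definition fpreopen_map (R : realType) (X Y : Type) (tau : set X -> R)
  (sigma : set Y -> R) (f : X -> Y) : R :=
  inf01 [set Num.min 1 (1 - preopen tau U + preopen sigma (f @` U)) | U in [set: set X]].

(* Since beta <= tau_P, the degree computed with beta can only be larger.
   Conversely, if beta(B) + c - 1 <= sigma_P(f B) for every B, then for x in U
   every B with x in B <= U gives beta(B) + c - 1 <= Int(Cl(f U))(f x), because
   sigma_P(f B) is an infimum over f B containing f x and Int, Cl are monotone.
   Taking the supremum over such B and using the pre-base property
   tau_P(U) <= N^P_x(U) <= sup beta(B) yields tau_P(U) + c - 1 <= sigma_P(f U). *)
From Pilot Require Import Defs.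
From HB Require Import structures.
From mathcomp Require Import all_boot all_order all_algebra.
From mathcomp Require Import all_classical all_reals.
From mathcomp Require Import lra.
Import Order.TTheory GRing.Theory Num.Theory.
Local Open Scope classical_set_scope.
Local Open Scope ring_scope.
Set Implicit Arguments.
Unset Strict Implicit.

Section UnitIntervalBounds.
Variable R : realType.
Implicit Types (S T : set R) (a x : R).

(* Outside their domain of definition [inf] and [sup] are [0], which is still in [0, 1]. *)
Lemma inf01_le1 S : inf01 S <= 1.
Proof.
rewrite /inf01; have [lbS|nlbS] := pselect (has_lbound (S `|` [set 1])).
  by apply: ge_inf => //; right.
by rewrite inf_out ?ler01 // => -[].
Qed.

Lemma sup01_ge0 S : 0 <= sup01 S.
Proof.
rewrite /sup01; have [ubS|nubS] := pselect (has_ubound (S `|` [set 0])).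
  by apply: ub_le_sup => //; right.
by rewrite sup_out // => -[].
Qed.

Lemma inf01_le S x : (forall y, S y -> 0 <= y) -> S x -> inf01 S <= x.
Proof.
move=> S_ge0 Sx; apply: ge_inf; last by left.
by exists 0 => y [/S_ge0 //|->].
Qed.

Lemma le_inf01 S a : (forall y, S y -> a <= y) -> a <= 1 -> a <= inf01 S.
Proof.
move=> aS a_le1; apply: lb_le_inf; first by exists 1; right.
by move=> y [/aS //|->].
Qed.

Lemma sup01_ge S x : (forall y, S y -> y <= 1) -> S x -> x <= sup01 S.
Proof.
move=> S_le1 Sx; apply: ub_le_sup; last by left.
by exists 1 => y [/S_le1 //|->]; exact: ler01.
Qed.

Lemma sup01_le S a : (forall y, S y -> y <= a) -> 0 <= a -> sup01 S <= a.
Proof.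
move=> Sa a_ge0; apply: ge_sup; first by exists 0; right.
by move=> y [/Sa //|->].
Qed.

Lemma inf01_ge0 S : (forall y, S y -> 0 <= y) -> 0 <= inf01 S.
Proof. by move=> S_ge0; apply: le_inf01 => //; exact: ler01. Qed.

Lemma inf01_mono S T : (forall y, S y -> 0 <= y) ->
  (forall y, T y -> exists2 x, S x & x <= y) -> inf01 S <= inf01 T.
Proof.
move=> S_ge0 TS; apply: le_inf01; last exact: inf01_le1.
by move=> y /TS [x Sx]; apply: le_trans; exact: inf01_le.
Qed.

Lemma sup01_mono S T : (forall y, T y -> y <= 1) ->
  (forall y, S y -> exists2 x, T x & y <= x) -> sup01 S <= sup01 T.
Proof.
move=> T_le1 ST; apply: sup01_le; last exact: sup01_ge0.
by move=> y /ST [x Tx] /le_trans; apply; exact: sup01_ge.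
Qed.

End UnitIntervalBounds.

Section FuzzyOperators.
Variables (R : realType) (Z : Type) (tau : set Z -> R).

Lemma finterior_ge0 mu x : 0 <= finterior tau mu x.
Proof. exact: sup01_ge0. Qed.

Lemma finterior_mono (mu mu' : Z -> R) x : (forall z, 0 <= mu z) ->
  (forall z, mu z <= mu' z) -> finterior tau mu x <= finterior tau mu' x.
Proof.
move=> mu_ge0 le_mu; apply: sup01_mono.
  by move=> _ [B _ <-]; rewrite ge_min inf01_le1 orbT.
move=> _ [B Bx <-]; exists (Num.min (tau B) (inf01 (mu' @` B))); first by exists B.
apply: le_min2 => //; apply: inf01_mono => [_ [z _ <-] //|_ [z Bz <-]].
by exists (mu z) => //; exists z.
Qed.

Lemma preopen_ge0 A : 0 <= preopen tau A.
Proof. by apply: inf01_ge0 => _ [x _ <-]; exact: finterior_ge0. Qed.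

Lemma preopen_le1 A : preopen tau A <= 1.
Proof. exact: inf01_le1. Qed.

Lemma preopen_le_prenbhd U x : U x -> preopen tau U <= prenbhd tau x U.
Proof.
move=> Ux; apply: sup01_ge => [_ [B _ <-]|]; first exact: preopen_le1.
by exists U => //; split.
Qed.

Hypothesis tau_le1 : forall A, tau A <= 1.

Lemma fclosure_ge0 A x : 0 <= Defs.fclosure tau A x.
Proof.
rewrite /Defs.fclosure subr_ge0.
by apply: sup01_le => [_ [B _ <-]|]; [exact: tau_le1|exact: ler01].
Qed.

Lemma fclosure_mono A A' x : A `<=` A' -> Defs.fclosure tau A x <= Defs.fclosure tau A' x.
Proof.
move=> AA'; rewrite /Defs.fclosure lerD2l lerN2.
apply: sup01_mono => [_ [B _ <-] //|].
move=> _ [B [Bx BA'] <-]; exists (tau B) => //; exists B => //.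
by split=> // z /BA' A'z Az; exact/A'z/AA'.
Qed.

Lemma preopen_le_finterior_fclosure A A' y : A `<=` A' -> A y ->
  preopen tau A <= finterior tau (Defs.fclosure tau A') y.
Proof.
move=> AA' Ay; apply: (@le_trans _ _ (finterior tau (Defs.fclosure tau A) y)).
  by apply: inf01_le => [_ [z _ <-]|]; [exact: finterior_ge0|exists y].
by apply: finterior_mono => z; [exact: fclosure_ge0|exact: fclosure_mono].
Qed.

End FuzzyOperators.

Section LukasiewiczForall.
Variables (R : realType) (I : Type).

(* Truth value of [forall i, a i -> b i] under the Lukasiewicz implication
   [min(1, 1 - p + q)]; [fpreopen_map] is such a degree. *)
Definition forall_imp (a b : I -> R) : R :=
  inf01 [set Num.min 1 (1 - a i + b i) | i in [set: I]].

Lemma forall_imp_le1 a b : forall_imp a b <= 1.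
Proof. exact: inf01_le1. Qed.

Lemma le_forall_imp a b c :
  c <= 1 -> (forall i, a i + c - 1 <= b i) -> c <= forall_imp a b.
Proof.
move=> c_le1 abc; apply: le_inf01 => // _ [i _ <-].
by rewrite le_min c_le1 /=; have := abc i; lra.
Qed.

Lemma forall_imp_le a b i : (forall j, a j <= 1) -> (forall j, 0 <= b j) ->
  a i + forall_imp a b - 1 <= b i.
Proof.
move=> a_le1 b_ge0.
have : forall_imp a b <= Num.min 1 (1 - a i + b i).
  apply: inf01_le; last by exists i.
  by move=> _ [j _ <-]; rewrite le_min ler01 /=; have := a_le1 j; have := b_ge0 j; lra.
by rewrite le_min => /andP[_]; lra.
Qed.

Lemma forall_imp_antimono a a' b : (forall i, a' i <= 1) -> (forall i, 0 <= b i) ->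
  (forall i, a i <= a' i) -> forall_imp a' b <= forall_imp a b.
Proof.
move=> a'_le1 b_ge0 le_a; apply: le_forall_imp; first exact: forall_imp_le1.
by move=> i; have := forall_imp_le i a'_le1 b_ge0; have := le_a i; lra.
Qed.

End LukasiewiczForall.

Lemma preopen_le_image_preopen (R : realType) (X Y : Type) (tau : set X -> R)
    (sigma : set Y -> R) (f : X -> Y) (beta : set X -> R) (c : R) (U : set X) :
  (forall A, sigma A <= 1) ->
  (forall x A, prenbhd tau x A <= sup01 [set beta B | B in [set B | B x /\ B `<=` A]]) ->
  c <= 1 -> (forall B, beta B + c - 1 <= preopen sigma (f @` B)) ->
  preopen tau U + c - 1 <= preopen sigma (f @` U).
Proof.
move=> sigma_le1 prebase_sup c_le1 beta_c.
apply: le_inf01 => [_ [_ [x Ux <-] <-]|]; last by have := preopen_le1 tau U; lra.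
set v := finterior _ _ _.
have v_ge0 : 0 <= v by exact: finterior_ge0.
have : sup01 [set beta B | B in [set B | B x /\ B `<=` U]] <= v + 1 - c.
  apply: sup01_le => [_ [B [Bx BU] <-]|]; last by lra.
  have fBU : f @` B `<=` f @` U by move=> _ [z Bz <-]; exists z => //; exact: BU.
  have := preopen_le_finterior_fclosure sigma_le1 fBU (imageP f Bx); rewrite -/v.
  by have := beta_c B; lra.
by have := le_trans (preopen_le_prenbhd tau Ux) (prebase_sup x U); lra.
Qed.

Theorem lemma3p1 (R : realType) (X Y : Type) (tau : set X -> R) (sigma : set Y -> R)
  (f : X -> Y) (beta : set X -> R) :
  is_fuzzifying_topology tau -> is_fuzzifying_topology sigma ->
  is_prebase tau beta ->
  fpreopen_map tau sigma f =
  inf01 [set Num.min 1 (1 - beta B + preopen sigma (f @` B)) | B in [set: set X]].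
Proof.
move=> _ [sigma01 _ _ _] [beta01 beta_le_preopen prebase_sup].
have sigma_le1 A : sigma A <= 1 by case/andP: (sigma01 A).
have beta_le1 A : beta A <= 1 by case/andP: (beta01 A).
pose img_preopen U := preopen sigma (f @` U).
have img_ge0 U : 0 <= img_preopen U by exact: preopen_ge0.
change (forall_imp (preopen tau) img_preopen = forall_imp beta img_preopen).
apply/eqP; rewrite eq_le; apply/andP; split.
  by apply: forall_imp_antimono => //; exact: preopen_le1.
apply: le_forall_imp => [|U]; first exact: forall_imp_le1.
apply: preopen_le_image_preopen sigma_le1 prebase_sup _ _ => [|B].
  exact: forall_imp_le1.
exact: forall_imp_le.
Qed.
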